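(* Let $a,b\in\mathbf R$ and $C\in\mathbf R^{1,1}$. Every maximally extended space-like curve $X$ in $\mathbf R^{1,1}$ satisfying $$a\langle X,T\rangle - b\langle X,N\rangle - \langle C,N\rangle = k$$ is an entire graph over the $x$-axis, i.e. of the form $y=y(x)$, $x\in\mathbf R$, with $|y'(x)|<1$.
   Context: $\mathbf R^{1,1}$ is $\mathbf R^2$ with $\langle (x_1,y_1),(x_2,y_2)\rangle = x_1x_2-y_1y_2$, points written $x+hy$ with $h^2=1$. A curve is space-like if $\langle X_u,X_u\rangle>0$. With arc-length $ds=\sqrt{\langle X_u,X_u\rangle}\,du$, $T=X_s$, $N=hT$ (the reflection of $T$ across the line $y=x$), and $k$ defined by $T_s=kN$. *)

From Stdlib Require Import Reals.
From Coquelicot Require Import Coquelicot.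
Open Scope R_scope.

(* Lorentz-Minkowski plane R^{1,1}: points (x,y) ~ x + h y. *)
Definition lor (p q : R * R) : R := fst p * fst q - snd p * snd q.

(* Multiplication by h: h (x + h y) = y + h x, i.e. reflection across y = x. *)
Definition hmul (v : R * R) : R * R := (snd v, fst v).

Definition in_ival (al be : Rbar) (s : R) : Prop :=
  Rbar_lt al (Finite s) /\ Rbar_lt (Finite s) be.

(* X is a space-like curve, parametrized by arc length on (al, be), with unit
   tangent T = X_s (<T,T> = 1), normal N = h T, curvature k given by T_s = k N,
   satisfying  a<X,T> - b<X,N> - <C,N> = k. *)
Definition sol_curve (a b : R) (C : R * R) (al be : Rbar)
  (X T : R -> R * R) (k : R -> R) : Prop :=
  Rbar_lt al be /\
  forall s, in_ival al be s ->
    is_derive (fun t => fst (X t)) s (fst (T s)) /\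
    is_derive (fun t => snd (X t)) s (snd (T s)) /\
    lor (T s) (T s) = 1 /\
    is_derive (fun t => fst (T t)) s (k s * fst (hmul (T s))) /\
    is_derive (fun t => snd (T t)) s (k s * snd (hmul (T s))) /\
    a * lor (X s) (T s) - b * lor (X s) (hmul (T s)) - lor C (hmul (T s)) = k s.

Definition maximal_sol (a b : R) (C : R * R) (al be : Rbar) (X : R -> R * R) : Prop :=
  ~ exists (al' be' : Rbar) (X' T' : R -> R * R) (k' : R -> R),
      sol_curve a b C al' be' X' T' k' /\
      Rbar_le al' al /\ Rbar_le be be' /\ (al' <> al \/ be' <> be) /\
      (forall s, in_ival al be s -> X' s = X s).

From Stdlib Require Import Reals Lra Lia Ranalysis5.
From Stdlib Require Import Classical IndefiniteDescription FunctionalExtensionality.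
From Coquelicot Require Import Coquelicot.
Open Scope R_scope.

(* Since <T, T> = 1 we have |T2| < |T1| and |T1| >= 1, so x is strictly monotone along the
   curve with |dy/dx| < 1 and |x(s) - x(s')| >= |s - s'|: the curve is a graph, and it remains
   to show that x is unbounded in both directions.  On an infinite parameter interval this is
   the expansion estimate.  If the interval ended at a finite B with x bounded, then X would
   stay bounded, hence |k| <= A (P + Q) for the light-cone coordinates P = +-(T1 + T2),
   Q = +-(T1 - T2), PQ = 1.  Then |Q'| <= A (1 + Q^2), while (x + y)' = 1/Q and (x - y)' = 1/P
   have bounded primitives; so neither P nor Q tends to 0, (X, T) stays bounded, and a
   Picard-Lindelof step continues the solution past B, contradicting maximality.  Reversing the
   parameter handles the other end. *)

Lemma pow_half_pos n : 0 < (1/2)^n.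
Proof. apply pow_lt; lra. Qed.

Lemma pow_half_le n m : (n <= m)%nat -> (1/2)^m <= (1/2)^n.
Proof.
  induction 1 as [|m _ IH]; [lra|].
  simpl. pose proof (pow_half_pos m). lra.
Qed.

Lemma pow_half_lt e : 0 < e -> exists n, (1/2)^n < e.
Proof.
  intros He.
  destruct (pow_lt_1_zero (1/2) ltac:(rewrite Rabs_pos_eq; lra) e He) as [N HN].
  exists N. specialize (HN N (Nat.le_refl _)).
  rewrite Rabs_pos_eq in HN; [exact HN|]. apply pow_le; lra.
Qed.

Lemma Rle_of_le_geometric x y D : (forall n, x <= y + D * (1/2)^n) -> x <= y.
Proof.
  intros H. destruct (Rle_or_lt x y) as [|Hlt]; [assumption|exfalso].
  destruct (Rle_or_lt D 0) as [HD|HD].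
  - specialize (H O). simpl in H. lra.
  - destruct (pow_half_lt ((x - y) / D)) as [n Hn].
    { apply Rdiv_lt_0_compat; lra. }
    specialize (H n). apply (Rmult_lt_compat_l D) in Hn; [|exact HD].
    replace (D * ((x - y) / D)) with (x - y) in Hn by (field; lra). lra.
Qed.

Lemma eq_of_dist_geometric x y D : (forall n, Rabs (x - y) <= D * (1/2)^n) -> x = y.
Proof.
  intros H.
  assert (Rabs (x - y) <= 0)
    by (apply (Rle_of_le_geometric _ _ D); intros n; specialize (H n); lra).
  pose proof (Rabs_pos (x - y)).
  apply Rminus_diag_uniq, Rabs_eq_0. lra.
Qed.

Lemma dist_le_of_succ_geometric (u : nat -> R) C :
  (forall n, Rabs (u (S n) - u n) <= C * (1/2)^n) ->
  forall n m, (n <= m)%nat -> Rabs (u m - u n) <= 2 * C * (1/2)^n.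
Proof.
  intros H n m Hnm.
  assert (Htel : forall p, Rabs (u (n + p)%nat - u n) <= 2 * C * (1/2)^n - 2 * C * (1/2)^(n + p)).
  { induction p as [|p IH].
    - rewrite Nat.add_0_r, Rminus_diag, Rabs_R0. lra.
    - replace (n + S p)%nat with (S (n + p)) by lia.
      replace (u (S (n + p)) - u n)
        with ((u (S (n + p)) - u (n + p)%nat) + (u (n + p)%nat - u n)) by ring.
      eapply Rle_trans; [apply Rabs_triang|].
      specialize (H (n + p)%nat). simpl pow. lra. }
  assert (HC : 0 <= C).
  { specialize (H O). simpl in H. pose proof (Rabs_pos (u 1%nat - u 0%nat)). lra. }
  replace m with (n + (m - n))%nat by lia.
  specialize (Htel (m - n)%nat). pose proof (pow_half_pos (n + (m - n))). nra.
Qed.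

Lemma Lim_seq_dist_geometric (u : nat -> R) C :
  (forall n, Rabs (u (S n) - u n) <= C * (1/2)^n) ->
  forall n, Rabs (Lim_seq u - u n) <= 2 * C * (1/2)^n.
Proof.
  intros H.
  pose proof (dist_le_of_succ_geometric u C H) as Hb.
  assert (HC : 0 <= C).
  { specialize (H O). simpl in H. pose proof (Rabs_pos (u 1%nat - u 0%nat)). lra. }
  assert (Hex : ex_finite_lim_seq u).
  { apply ex_lim_seq_cauchy_corr. intros eps.
    destruct (pow_half_lt (eps / (2 * C + 1))) as [N HN].
    { apply Rdiv_lt_0_compat; [apply cond_pos|lra]. }
    exists N. intros p q Hp Hq.
    assert (Hk : (2 * C + 1) * (1/2)^N < eps).
    { apply (Rmult_lt_compat_l (2 * C + 1)) in HN; [|lra].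
      replace ((2 * C + 1) * (eps / (2 * C + 1))) with (pos eps) in HN by (field; lra). lra. }
    pose proof (pow_half_le N p Hp). pose proof (pow_half_le N q Hq). pose proof (pow_half_pos N).
    destruct (Nat.le_ge_cases p q) as [Hpq|Hpq].
    - specialize (Hb p q Hpq). rewrite Rabs_minus_sym. nra.
    - specialize (Hb q p Hpq). nra. }
  destruct Hex as [l Hl]. rewrite (is_lim_seq_unique _ _ Hl). simpl. intros n.
  apply Rabs_le. split.
  - assert (Rbar_le (u n - 2 * C * (1/2)^n) l); [|simpl in *; lra].
    apply (is_lim_seq_le_loc (fun _ => u n - 2 * C * (1/2)^n) u);
      [|apply is_lim_seq_const|exact Hl].
    exists n. intros m Hm. specialize (Hb n m Hm). apply Rabs_le_between' in Hb. lra.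
  - assert (Rbar_le l (u n + 2 * C * (1/2)^n)); [|simpl in *; lra].
    apply (is_lim_seq_le_loc u (fun _ => u n + 2 * C * (1/2)^n));
      [|exact Hl|apply is_lim_seq_const].
    exists n. intros m Hm. specialize (Hb n m Hm). apply Rabs_le_between' in Hb. lra.
Qed.

Lemma lipschitz_continuous (f : R -> R) L :
  (forall x y, Rabs (f x - f y) <= L * Rabs (x - y)) -> forall x, continuous f x.
Proof.
  intros H x. apply continuity_pt_filterlim.
  intros e He. pose proof (Rabs_pos L). pose proof (Rle_abs L).
  exists (e / (Rabs L + 1)). split; [apply Rdiv_lt_0_compat; lra|].
  intros y [_ Hy]. simpl in *. unfold R_dist in *.
  eapply Rle_lt_trans; [apply H|]. pose proof (Rabs_pos (y - x)).
  apply (Rmult_lt_compat_l (Rabs L + 1)) in Hy; [|lra].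
  replace ((Rabs L + 1) * (e / (Rabs L + 1))) with e in Hy by (field; lra). nra.
Qed.

Lemma le_of_is_derive_nonneg (f df : R -> R) a b : a <= b ->
  (forall x, a <= x <= b -> is_derive f x (df x) /\ 0 <= df x) -> f a <= f b.
Proof.
  intros Hab Hd.
  destruct (MVT_gen f a b df) as [c [Hc Hm]];
    rewrite ?Rmin_left, ?Rmax_right in * by lra.
  - intros x Hx. apply Hd; lra.
  - intros x Hx. apply continuity_pt_filterlim, (ex_derive_continuous f).
    exists (df x). apply Hd; lra.
  - destruct (Hd c Hc). nra.
Qed.

Lemma IVT_le (f : R -> R) x y : x <= y -> (forall a, x <= a <= y -> continuity_pt f a) ->
  f x <= 0 <= f y -> exists z, x <= z <= y /\ f z = 0.
Proof.
  intros Hxy Hc Hf.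
  destruct (Req_dec (f x) 0); [exists x; split; [lra|assumption]|].
  destruct (Req_dec (f y) 0); [exists y; split; [lra|assumption]|].
  destruct (Req_dec x y) as [->|Hne]; [lra|].
  destruct (IVT_interv f x y Hc) as [z Hz]; [lra..|]. exists z. exact Hz.
Qed.

Lemma RInt_abs_le (f : R -> R) a b M : ex_RInt f a b ->
  (forall t, Rmin a b <= t <= Rmax a b -> Rabs (f t) <= M) ->
  Rabs (RInt f a b) <= Rabs (b - a) * M.
Proof.
  intros He Hb. destruct (Rle_or_lt a b).
  - rewrite (Rabs_pos_eq (b - a)) by lra. apply abs_RInt_le_const; [assumption|assumption|].
    intros t Ht. apply Hb. rewrite Rmin_left, Rmax_right; lra.
  - rewrite <- (opp_RInt_swap f b a (ex_RInt_swap _ _ _ He)).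
    change (opp (RInt f b a)) with (- RInt f b a).
    rewrite Rabs_Ropp, (Rabs_left (b - a)) by lra. replace (- (b - a)) with (a - b) by ring.
    apply abs_RInt_le_const; [lra|apply ex_RInt_swap; assumption|].
    intros t Ht. apply Hb. rewrite Rmin_right, Rmax_left; lra.
Qed.

Lemma Rinv_dist_lt q d eps : d <> 0 ->
  Rabs (q - d) < Rmin (Rabs d / 2) (eps * (d * d) / 2) -> Rabs (/ q - / d) < eps.
Proof.
  intros Hd0 Hq.
  assert (Hq1 : Rabs (q - d) < Rabs d / 2) by (eapply Rlt_le_trans; [exact Hq|apply Rmin_l]).
  assert (Hq2 : Rabs (q - d) < eps * (d * d) / 2) by (eapply Rlt_le_trans; [exact Hq|apply Rmin_r]).
  assert (Hdd : 0 < Rabs d) by (apply Rabs_pos_lt; exact Hd0).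
  assert (Hq0 : Rabs d / 2 <= Rabs q).
  { pose proof (Rabs_triang_inv d (d - q)) as Htri. replace (d - (d - q)) with q in Htri by ring.
    rewrite Rabs_minus_sym in Hq1. lra. }
  assert (q <> 0) by (intro E; rewrite E, Rabs_R0 in Hq0; lra).
  replace (/ q - / d) with ((d - q) / (q * d)) by (field; auto).
  unfold Rdiv. rewrite Rabs_mult, Rabs_inv, Rabs_mult, Rabs_minus_sym.
  assert (Hqd : 0 < Rabs q * Rabs d) by nra.
  apply (Rmult_lt_reg_r (Rabs q * Rabs d)); [exact Hqd|].
  rewrite Rmult_assoc, Rinv_l, Rmult_1_r by lra.
  assert (Hsq : Rabs d * Rabs d = d * d) by (rewrite <- Rabs_mult; apply Rabs_pos_eq; nra).
  assert (Heps : 0 <= eps) by (pose proof (Rabs_pos (q - d)); nra).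
  assert (Hlow : eps * (Rabs d * Rabs d) / 2 <= eps * (Rabs q * Rabs d)).
  { replace (eps * (Rabs d * Rabs d) / 2) with (eps * (Rabs d / 2 * Rabs d)) by field.
    apply Rmult_le_compat_l; [exact Heps|apply Rmult_le_compat_r; lra]. }
  rewrite Hsq in Hlow. lra.
Qed.

Lemma is_derive_inverse (Fn G : R -> R) t d : continuous G t ->
  locally t (fun u => Fn (G u) = u) -> is_derive Fn (G t) d -> d <> 0 ->
  is_derive G t (/ d).
Proof.
  intros Hc [d3 Hinv] Hd Hd0. apply is_derive_Reals. apply is_derive_Reals in Hd.
  intros eps Heps.
  set (e1 := Rmin (Rabs d / 2) (eps * (d * d) / 2)).
  assert (He1 : 0 < e1).
  { pose proof (Rabs_pos_lt d Hd0). assert (0 < d * d) by nra.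
    apply Rmin_pos; apply Rdiv_lt_0_compat; nra. }
  destruct (Hd e1 He1) as [d1 Hd1].
  apply continuity_pt_filterlim in Hc.
  destruct (proj1 (continuity_pt_locally _ _) Hc d1) as [d2 Hd2].
  exists (mkposreal _ (Rmin_pos _ _ (cond_pos d2) (cond_pos d3))). simpl.
  intros u Hu0 Hu.
  assert (Hball : forall e : posreal, Rmin d2 d3 <= e -> ball t e (t + u)).
  { intros e He. unfold ball; simpl; unfold AbsRing_ball, minus, plus, opp; simpl.
    replace (t + u + - t) with u by ring. change (Rabs u < e). lra. }
  assert (Ht : Fn (G t) = t) by (apply Hinv, ball_center).
  assert (Htu : Fn (G (t + u)) = t + u) by (apply Hinv, Hball, Rmin_r).
  set (eta := G (t + u) - G t).
  assert (Heta : eta <> 0).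
  { intros E. assert (EG : G (t + u) = G t) by (unfold eta in E; lra). rewrite EG in Htu. lra. }
  assert (Heta2 : Rabs eta < d1) by (apply Hd2, Hball, Rmin_l).
  specialize (Hd1 eta Heta Heta2).
  replace (G t + eta) with (G (t + u)) in Hd1 by (unfold eta; ring).
  rewrite Htu, Ht in Hd1. replace (t + u - t) with u in Hd1 by ring.
  replace (eta / u) with (/ (u / eta)) by (field; auto).
  apply Rinv_dist_lt; assumption.
Qed.

Lemma eq_of_is_derive_zero (f : R -> R) a b :
  (forall x, Rmin a b <= x <= Rmax a b -> is_derive f x 0) -> f a = f b.
Proof.
  intros Hd.
  destruct (MVT_gen f a b (fun _ => 0)) as [c [_ Hc]]; [intros x Hx; apply Hd; lra| |lra].
  intros x Hx. apply continuity_pt_filterlim, (ex_derive_continuous f). exists 0. apply Hd, Hx.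
Qed.

Definition dist_le (n : nat) (z w : nat -> R) (d : R) : Prop :=
  forall i, (i < n)%nat -> Rabs (z i - w i) <= d.

Lemma dist_le_sym n z w d : dist_le n z w d -> dist_le n w z d.
Proof. intros H i Hi. rewrite Rabs_minus_sym. apply H, Hi. Qed.

Lemma dist_le_trans n z w v d e : dist_le n z w d -> dist_le n w v e -> dist_le n z v (d + e).
Proof.
  intros H1 H2 i Hi. replace (z i - v i) with ((z i - w i) + (w i - v i)) by ring.
  eapply Rle_trans; [apply Rabs_triang|]. specialize (H1 i Hi). specialize (H2 i Hi). lra.
Qed.

Lemma dist_le_weaken n z w d e : dist_le n z w d -> d <= e -> dist_le n z w e.
Proof. intros H He i Hi. specialize (H i Hi). lra. Qed.

Lemma dist_le_of_derive_bound n (Z : R -> nat -> R) (dZ : R -> nat -> R) M s t : s <= t ->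
  (forall u i, (i < n)%nat -> s <= u <= t ->
     is_derive (fun v => Z v i) u (dZ u i) /\ Rabs (dZ u i) <= M) ->
  dist_le n (Z t) (Z s) (M * (t - s)).
Proof.
  intros Hst Hd i Hi.
  destruct (MVT_gen (fun v => Z v i) s t (fun u => dZ u i)) as [c [Hc Hm]];
    rewrite ?Rmin_left, ?Rmax_right in * by lra.
  - intros x Hx. apply Hd; [exact Hi|lra].
  - intros x Hx. apply continuity_pt_filterlim, (ex_derive_continuous (fun v => Z v i)).
    exists (dZ x i). apply Hd; [exact Hi|lra].
  - rewrite Hm, Rabs_mult, (Rabs_pos_eq (t - s)) by lra.
    apply Rmult_le_compat_r; [lra|apply Hd; [exact Hi|lra]].
Qed.

Definition clamp (t0 h t : R) : R := Rmax t0 (Rmin (t0 + h) t).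

Lemma clamp_range t0 h t : 0 <= h -> t0 <= clamp t0 h t <= t0 + h.
Proof. intros. unfold clamp, Rmax, Rmin. repeat destruct Rle_dec; lra. Qed.

Lemma clamp_id t0 h t : t0 <= t <= t0 + h -> clamp t0 h t = t.
Proof. intros. unfold clamp, Rmax, Rmin. repeat destruct Rle_dec; lra. Qed.

Lemma clamp_dist t0 h t s : 0 <= h -> Rabs (clamp t0 h t - clamp t0 h s) <= Rabs (t - s).
Proof.
  intros. unfold clamp, Rmax, Rmin. apply Rabs_le.
  pose proof (Rle_abs (t - s)). pose proof (Rle_abs (- (t - s))). rewrite Rabs_Ropp in *.
  repeat destruct Rle_dec; lra.
Qed.

Section Picard.

Variables (n : nat) (F : (nat -> R) -> nat -> R) (z0 : nat -> R) (t0 h M L : R).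
Hypotheses (Hh : 0 < h) (HM : 0 <= M) (HL : 0 <= L) (HMh : M * h <= 1) (HLh : L * h <= 1/2).
Hypothesis F_bounded :
  forall z, dist_le n z z0 1 -> forall i, (i < n)%nat -> Rabs (F z i) <= M.
Hypothesis F_lipschitz : forall z w d, dist_le n z z0 1 -> dist_le n w z0 1 ->
  dist_le n z w d -> dist_le n (F z) (F w) (L * d).

Definition admissible (psi : R -> nat -> R) : Prop :=
  (forall t, dist_le n (psi t) z0 1) /\
  (forall t s, dist_le n (psi t) (psi s) (M * Rabs (t - s))).

(* Integrating up to [clamp t0 h t] instead of [t] freezes the iterates outside
   [t0, t0 + h], so that they stay in the unit box around [z0] for all times. *)
Definition picard_step (psi : R -> nat -> R) (t : R) (i : nat) : R :=
  z0 i + RInt (fun u => F (psi u) i) t0 (clamp t0 h t).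

Lemma field_along_continuous psi i : admissible psi -> (i < n)%nat ->
  forall x, continuous (fun u => F (psi u) i) x.
Proof.
  intros [Hb Hl] Hi. apply (lipschitz_continuous _ (L * M)). intros x y.
  rewrite Rmult_assoc. apply F_lipschitz; auto.
Qed.

Lemma field_along_integrable psi i : admissible psi -> (i < n)%nat ->
  forall a b, ex_RInt (fun u => F (psi u) i) a b.
Proof.
  intros Hp Hi a b. apply (ex_RInt_continuous (V := R_CompleteNormedModule)).
  intros. apply field_along_continuous; assumption.
Qed.

Lemma picard_step_admissible psi : admissible psi -> admissible (picard_step psi).
Proof.
  intros Hp. pose proof (fun i => field_along_integrable psi i Hp) as Hint.
  split.
  - intros t i Hi. unfold picard_step.
    rewrite Rplus_minus_l.
    eapply Rle_trans; [apply RInt_abs_le; [apply Hint, Hi|intros; apply F_bounded, Hi; apply Hp]|].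
    pose proof (clamp_range t0 h t ltac:(lra)).
    rewrite Rabs_pos_eq by lra. nra.
  - intros t s i Hi. unfold picard_step.
    pose proof (RInt_Chasles (fun u => F (psi u) i) t0 (clamp t0 h s) (clamp t0 h t)
      (Hint i Hi _ _) (Hint i Hi _ _)) as E.
    change (plus ?x ?y) with (x + y) in E.
    rewrite Rminus_plus_l_l, <- E, Rplus_minus_l.
    eapply Rle_trans; [apply RInt_abs_le; [apply Hint, Hi|intros; apply F_bounded, Hi; apply Hp]|].
    rewrite Rmult_comm. apply Rmult_le_compat_l; [exact HM|apply clamp_dist; lra].
Qed.

Lemma picard_step_contraction psi chi d : admissible psi -> admissible chi ->
  (forall t, dist_le n (psi t) (chi t) d) ->
  forall t, dist_le n (picard_step psi t) (picard_step chi t) (L * h * d).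
Proof.
  intros Hp Hc Hd t i Hi. unfold picard_step.
  assert (Hd0 : 0 <= d)
    by (specialize (Hd t0 i Hi); pose proof (Rabs_pos (psi t0 i - chi t0 i)); lra).
  pose proof (RInt_minus (fun u => F (psi u) i) (fun u => F (chi u) i) t0 (clamp t0 h t)
    (field_along_integrable psi i Hp Hi _ _) (field_along_integrable chi i Hc Hi _ _)) as E.
  change (minus ?x ?y) with (x - y) in E.
  rewrite Rminus_plus_l_l, <- E.
  eapply Rle_trans.
  { apply RInt_abs_le.
    - apply (ex_RInt_minus (V := R_NormedModule)); apply field_along_integrable; assumption.
    - intros u _. apply F_lipschitz; [apply Hp|apply Hc|apply Hd|exact Hi]. }
  pose proof (clamp_range t0 h t ltac:(lra)). rewrite Rabs_pos_eq by lra.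
  apply Rle_trans with (h * (L * d)); [apply Rmult_le_compat_r; nra|lra].
Qed.

Fixpoint picard_iter (m : nat) : R -> nat -> R :=
  match m with O => fun _ => z0 | S m => picard_step (picard_iter m) end.

Lemma picard_iter_admissible m : admissible (picard_iter m).
Proof.
  induction m as [|m IH]; [|apply picard_step_admissible, IH].
  split; intros; simpl; intros i Hi; rewrite Rminus_diag, Rabs_R0;
    [lra|pose proof (Rabs_pos (t - s)); nra].
Qed.

Lemma picard_iter_succ_dist m t : dist_le n (picard_iter (S m) t) (picard_iter m t) (2 * (1/2)^m).
Proof.
  revert t. induction m as [|m IH]; intros t.
  - intros i Hi. pose proof (proj1 (picard_iter_admissible 1) t i Hi). simpl in *. lra.
  - intros i Hi. pose proof (pow_half_pos m).
    eapply Rle_trans; [apply (picard_step_contraction _ _ _ (picard_iter_admissible (S m))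
      (picard_iter_admissible m) IH t i Hi)|].
    simpl. nra.
Qed.

Definition picard_limit (t : R) (i : nat) : R := Lim_seq (fun m => picard_iter m t i).

Lemma picard_limit_dist m t : dist_le n (picard_limit t) (picard_iter m t) (4 * (1/2)^m).
Proof.
  intros i Hi. unfold picard_limit.
  replace 4 with (2 * 2) by ring.
  apply (Lim_seq_dist_geometric (fun m => picard_iter m t i)).
  intros p. apply picard_iter_succ_dist, Hi.
Qed.

Lemma picard_limit_admissible : admissible picard_limit.
Proof.
  split.
  - intros t i Hi. apply (Rle_of_le_geometric _ _ 4). intros m.
    pose proof (picard_limit_dist m t i Hi). pose proof (proj1 (picard_iter_admissible m) t i Hi).
    replace (picard_limit t i - z0 i)
      with ((picard_limit t i - picard_iter m t i) + (picard_iter m t i - z0 i)) by ring.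
    eapply Rle_trans; [apply Rabs_triang|]. lra.
  - intros t s i Hi. apply (Rle_of_le_geometric _ _ 8). intros m.
    pose proof (dist_le_trans _ _ _ _ _ _ (picard_limit_dist m t)
      (dist_le_trans _ _ _ _ _ _ (proj2 (picard_iter_admissible m) t s)
        (dist_le_sym _ _ _ _ (picard_limit_dist m s))) i Hi).
    lra.
Qed.

Lemma picard_limit_fixed t i : (i < n)%nat -> picard_limit t i = picard_step picard_limit t i.
Proof.
  intros Hi. apply (eq_of_dist_geometric _ _ 4). intros m.
  pose proof (picard_limit_dist (S m) t i Hi) as H1.
  pose proof (picard_step_contraction _ _ _ (picard_iter_admissible m) picard_limit_admissible
    (fun t => dist_le_sym _ _ _ _ (picard_limit_dist m t)) t i Hi) as H2.
  simpl in H1. pose proof (pow_half_pos m).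
  replace (picard_limit t i - picard_step picard_limit t i) with
    ((picard_limit t i - picard_step (picard_iter m) t i)
     + (picard_step (picard_iter m) t i - picard_step picard_limit t i)) by ring.
  eapply Rle_trans; [apply Rabs_triang|]. nra.
Qed.

Lemma picard_limit_start i : (i < n)%nat -> picard_limit t0 i = z0 i.
Proof.
  intros Hi. rewrite picard_limit_fixed by exact Hi. unfold picard_step.
  rewrite clamp_id, RInt_point by lra. change (@zero R_CompleteNormedModule) with 0. ring.
Qed.

Lemma picard_limit_derive t i : (i < n)%nat -> t0 < t < t0 + h ->
  is_derive (fun u => picard_limit u i) t (F (picard_limit t) i).
Proof.
  intros Hi Ht.
  apply (is_derive_ext_loc (fun u => z0 i + RInt (fun v => F (picard_limit v) i) t0 u)).
  { apply (locally_interval _ t t0 (t0 + h)); simpl; try lra.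
    intros y Hy1 Hy2. rewrite (picard_limit_fixed y i Hi). unfold picard_step.
    rewrite clamp_id; lra. }
  rewrite <- (Rplus_0_l (F (picard_limit t) i)).
  apply (is_derive_plus (fun _ => z0 i)); [exact (is_derive_const (z0 i) t)|].
  apply (is_derive_RInt (V := R_CompleteNormedModule) (fun v => F (picard_limit v) i) _ t0).
  - apply filter_forall. intros. apply RInt_correct.
    apply field_along_integrable; [apply picard_limit_admissible|exact Hi].
  - apply field_along_continuous; [apply picard_limit_admissible|exact Hi].
Qed.

End Picard.

Lemma picard_lindelof n F z0 t0 h M L :
  0 < h -> 0 <= M -> 0 <= L -> M * h <= 1 -> L * h <= 1/2 ->
  (forall z, dist_le n z z0 1 -> forall i, (i < n)%nat -> Rabs (F z i) <= M) ->
  (forall z w d, dist_le n z z0 1 -> dist_le n w z0 1 -> dist_le n z w d ->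
     dist_le n (F z) (F w) (L * d)) ->
  exists phi : R -> nat -> R,
    (forall t, dist_le n (phi t) z0 1) /\
    (forall t s, dist_le n (phi t) (phi s) (M * Rabs (t - s))) /\
    (forall i, (i < n)%nat -> phi t0 i = z0 i) /\
    (forall t i, (i < n)%nat -> t0 < t < t0 + h -> is_derive (fun u => phi u i) t (F (phi t) i)).
Proof.
  intros. exists (picard_limit F z0 t0 h).
  destruct (picard_limit_admissible n F z0 t0 h M L) as [Hb Hl]; auto.
  split; [|split; [|split]]; auto; intros.
  - apply (picard_limit_start n F z0 t0 h M L); auto.
  - apply (picard_limit_derive n F z0 t0 h M L); auto.
Qed.

Lemma ode_solution_unique n F z0 L (psi chi : R -> nat -> R) t0 t1 :
  0 <= L -> L * (t1 - t0) <= 1/2 -> t0 <= t1 ->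
  (forall z w d, dist_le n z z0 1 -> dist_le n w z0 1 -> dist_le n z w d ->
     dist_le n (F z) (F w) (L * d)) ->
  (forall t, t0 <= t <= t1 -> dist_le n (psi t) z0 1 /\ dist_le n (chi t) z0 1) ->
  (forall i, (i < n)%nat -> psi t0 i = chi t0 i) ->
  (forall t i, (i < n)%nat -> t0 < t < t1 ->
     is_derive (fun u => psi u i) t (F (psi t) i) /\
     is_derive (fun u => chi u i) t (F (chi t) i)) ->
  (forall t i, (i < n)%nat -> t0 <= t <= t1 -> continuity_pt (fun u => psi u i - chi u i) t) ->
  forall t i, (i < n)%nat -> t0 <= t <= t1 -> psi t i = chi t i.
Proof.
  intros HL HLt Ht01 Hlip Hbox Hstart Hder Hcont.
  (* Each pass through the mean value theorem halves the a priori bound. *)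
  assert (Hgeom : forall m t, t0 <= t <= t1 -> dist_le n (psi t) (chi t) (2 * (1/2)^m)).
  { induction m as [|m IH]; intros t Ht i Hi.
    - destruct (Hbox t Ht) as [B1 B2].
      pose proof (dist_le_trans _ _ _ _ _ _ B1 (dist_le_sym _ _ _ _ B2) i Hi). simpl. lra.
    - destruct (MVT_gen (fun u => psi u i - chi u i) t0 t (fun c => F (psi c) i - F (chi c) i))
        as [c [Hc Hm]]; rewrite ?Rmin_left, ?Rmax_right in * by lra.
      + intros x Hx. destruct (Hder x i Hi ltac:(lra)) as [D1 D2].
        apply (is_derive_minus (fun u => psi u i) (fun u => chi u i)); assumption.
      + intros x Hx. apply Hcont; [exact Hi|lra].
      + rewrite (Hstart i Hi), Rminus_diag, Rminus_0_r in Hm. simpl in Hm. rewrite Hm.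
        destruct (Hbox c ltac:(lra)) as [B1 B2].
        pose proof (Hlip _ _ _ B1 B2 (IH c ltac:(lra)) i Hi) as Hf.
        rewrite Rabs_mult, (Rabs_pos_eq (t - t0)) by lra.
        pose proof (Rabs_pos (F (psi c) i - F (chi c) i)). pose proof (pow_half_pos m).
        simpl. nra. }
  intros t i Hi Ht. apply (eq_of_dist_geometric _ _ 2). intros m. apply Hgeom; assumption.
Qed.

Definition state_bounded (r : R) (z : nat -> R) : Prop :=
  forall i, (i < 4)%nat -> Rabs (z i) <= r.

Lemma state_bounded_weaken r r' z : state_bounded r z -> r <= r' -> state_bounded r' z.
Proof. intros H Hr i Hi. specialize (H i Hi). lra. Qed.

Lemma state_bounded_of_dist_le r z z0 d :
  state_bounded r z0 -> dist_le 4 z z0 d -> state_bounded (r + d) z.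
Proof.
  intros H0 H i Hi. specialize (H0 i Hi). specialize (H i Hi).
  replace (z i) with (z0 i + (z i - z0 i)) by ring.
  eapply Rle_trans; [apply Rabs_triang|lra].
Qed.

Definition locally_lipschitz (f : (nat -> R) -> R) : Prop :=
  forall r, exists B K, 0 <= B /\ 0 <= K /\
    (forall z, state_bounded r z -> Rabs (f z) <= B) /\
    (forall z w d, state_bounded r z -> state_bounded r w -> dist_le 4 z w d ->
       Rabs (f z - f w) <= K * d).

Lemma locally_lipschitz_const c : locally_lipschitz (fun _ => c).
Proof.
  intros r. exists (Rabs c), 0. repeat split; try lra; [apply Rabs_pos|right; reflexivity|].
  intros z w d _ _ Hd. pose proof (Hd O ltac:(lia)). rewrite Rminus_diag, Rabs_R0. lra.
Qed.

Lemma locally_lipschitz_coord i : (i < 4)%nat -> locally_lipschitz (fun z => z i).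
Proof.
  intros Hi r. exists (Rabs r), 1. repeat split; try lra; [apply Rabs_pos| |].
  - intros z Hz. eapply Rle_trans; [apply Hz, Hi|apply Rle_abs].
  - intros z w d _ _ Hd. rewrite Rmult_1_l. apply Hd, Hi.
Qed.

Lemma locally_lipschitz_plus f g :
  locally_lipschitz f -> locally_lipschitz g -> locally_lipschitz (fun z => f z + g z).
Proof.
  intros Hf Hg r. destruct (Hf r) as [Bf [Kf [? [? [Hfb Hfl]]]]].
  destruct (Hg r) as [Bg [Kg [? [? [Hgb Hgl]]]]].
  exists (Bf + Bg), (Kf + Kg). repeat split; try lra.
  - intros z Hz. eapply Rle_trans; [apply Rabs_triang|].
    specialize (Hfb z Hz). specialize (Hgb z Hz). lra.
  - intros z w d Hz Hw Hd.
    replace (f z + g z - (f w + g w)) with ((f z - f w) + (g z - g w)) by ring.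
    eapply Rle_trans; [apply Rabs_triang|].
    specialize (Hfl z w d Hz Hw Hd). specialize (Hgl z w d Hz Hw Hd). lra.
Qed.

Lemma locally_lipschitz_mult f g :
  locally_lipschitz f -> locally_lipschitz g -> locally_lipschitz (fun z => f z * g z).
Proof.
  intros Hf Hg r. destruct (Hf r) as [Bf [Kf [? [? [Hfb Hfl]]]]].
  destruct (Hg r) as [Bg [Kg [? [? [Hgb Hgl]]]]].
  exists (Bf * Bg), (Bf * Kg + Bg * Kf). repeat split; try nra.
  - intros z Hz. rewrite Rabs_mult.
    apply Rmult_le_compat; [apply Rabs_pos|apply Rabs_pos|apply Hfb, Hz|apply Hgb, Hz].
  - intros z w d Hz Hw Hd.
    replace (f z * g z - f w * g w) with (f z * (g z - g w) + g w * (f z - f w)) by ring.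
    eapply Rle_trans; [apply Rabs_triang|]. rewrite !Rabs_mult.
    pose proof (Rmult_le_compat _ _ _ _ (Rabs_pos _) (Rabs_pos _) (Hfb z Hz) (Hgl z w d Hz Hw Hd)).
    pose proof (Rmult_le_compat _ _ _ _ (Rabs_pos _) (Rabs_pos _) (Hgb w Hw) (Hfl z w d Hz Hw Hd)).
    lra.
Qed.

Lemma locally_lipschitz_minus f g :
  locally_lipschitz f -> locally_lipschitz g -> locally_lipschitz (fun z => f z - g z).
Proof.
  intros Hf Hg.
  assert (E : (fun z => f z - g z) = (fun z => f z + -1 * g z))
    by (apply functional_extensionality; intros; ring).
  rewrite E. apply locally_lipschitz_plus; [assumption|].
  apply locally_lipschitz_mult; [apply locally_lipschitz_const|assumption].
Qed.

Definition state_pos (z : nat -> R) : R * R := (z 0%nat, z 1%nat).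
Definition state_tan (z : nat -> R) : R * R := (z 2%nat, z 3%nat).

Definition curvature (a b : R) (C : R * R) (z : nat -> R) : R :=
  a * lor (state_pos z) (state_tan z) - b * lor (state_pos z) (hmul (state_tan z))
  - lor C (hmul (state_tan z)).

Definition curve_field (a b : R) (C : R * R) (z : nat -> R) (i : nat) : R :=
  match i with
  | 0%nat => z 2%nat
  | 1%nat => z 3%nat
  | 2%nat => curvature a b C z * z 3%nat
  | _ => curvature a b C z * z 2%nat
  end.

Lemma curvature_locally_lipschitz a b C : locally_lipschitz (curvature a b C).
Proof.
  unfold curvature, lor, hmul, state_pos, state_tan; simpl.
  repeat first
    [ apply locally_lipschitz_minus | apply locally_lipschitz_mult
    | apply locally_lipschitz_const | apply locally_lipschitz_coord; lia ].
Qed.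

Lemma curve_field_locally_lipschitz a b C i : locally_lipschitz (fun z => curve_field a b C z i).
Proof.
  pose proof (curvature_locally_lipschitz a b C).
  destruct i as [|[|[|[|]]]]; simpl;
    repeat first [apply locally_lipschitz_mult; [assumption|] | apply locally_lipschitz_coord; lia].
Qed.

Lemma curve_field_bounds a b C r : exists M L, 0 <= M /\ 0 <= L /\
  (forall z, state_bounded r z -> forall i, (i < 4)%nat -> Rabs (curve_field a b C z i) <= M) /\
  (forall z w d, state_bounded r z -> state_bounded r w -> dist_le 4 z w d ->
     dist_le 4 (curve_field a b C z) (curve_field a b C w) (L * d)).
Proof.
  destruct (curve_field_locally_lipschitz a b C 0 r) as [B0 [K0 [? [? [Hb0 Hl0]]]]].
  destruct (curve_field_locally_lipschitz a b C 1 r) as [B1 [K1 [? [? [Hb1 Hl1]]]]].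
  destruct (curve_field_locally_lipschitz a b C 2 r) as [B2 [K2 [? [? [Hb2 Hl2]]]]].
  destruct (curve_field_locally_lipschitz a b C 3 r) as [B3 [K3 [? [? [Hb3 Hl3]]]]].
  exists (B0 + B1 + B2 + B3), (K0 + K1 + K2 + K3). repeat split; try lra.
  - intros z Hz i Hi.
    specialize (Hb0 z Hz). specialize (Hb1 z Hz). specialize (Hb2 z Hz). specialize (Hb3 z Hz).
    destruct i as [|[|[|[|]]]]; try lia; lra.
  - intros z w d Hz Hw Hd i Hi.
    assert (0 <= d) by (pose proof (Hd O ltac:(lia)); pose proof (Rabs_pos (z O - w O)); lra).
    specialize (Hl0 z w d Hz Hw Hd). specialize (Hl1 z w d Hz Hw Hd).
    specialize (Hl2 z w d Hz Hw Hd). specialize (Hl3 z w d Hz Hw Hd).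
    destruct i as [|[|[|[|]]]]; try lia; nra.
Qed.

Lemma curvature_bound a b C z RX : Rabs (z 0%nat) <= RX -> Rabs (z 1%nat) <= RX ->
  Rabs (curvature a b C z) <=
  ((Rabs a + Rabs b) * RX + Rabs (fst C) + Rabs (snd C)) * (Rabs (z 2%nat) + Rabs (z 3%nat)).
Proof.
  intros Hx Hy. unfold curvature, lor, hmul, state_pos, state_tan; simpl.
  set (p := z 2%nat). set (q := z 3%nat).
  assert (Hbil : forall u v c d, Rabs u <= RX -> Rabs v <= RX ->
            Rabs (u * c - v * d) <= RX * (Rabs c + Rabs d)).
  { intros u v c d Hu Hv. unfold Rminus. eapply Rle_trans; [apply Rabs_triang|].
    rewrite Rabs_Ropp, !Rabs_mult.
    pose proof (Rmult_le_compat_r _ _ _ (Rabs_pos c) Hu).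
    pose proof (Rmult_le_compat_r _ _ _ (Rabs_pos d) Hv). lra. }
  assert (RX0 : 0 <= RX) by (pose proof (Rabs_pos (z 0%nat)); lra).
  pose proof (Hbil _ _ p q Hx Hy) as E1. pose proof (Hbil _ _ q p Hx Hy) as E2.
  assert (E3 : Rabs (fst C * q - snd C * p) <= (Rabs (fst C) + Rabs (snd C)) * (Rabs p + Rabs q)).
  { unfold Rminus. eapply Rle_trans; [apply Rabs_triang|]. rewrite Rabs_Ropp, !Rabs_mult.
    pose proof (Rabs_pos p). pose proof (Rabs_pos q).
    pose proof (Rabs_pos (fst C)). pose proof (Rabs_pos (snd C)). nra. }
  unfold Rminus at 1 2. eapply Rle_trans; [apply Rabs_triang|]. rewrite Rabs_Ropp.
  eapply Rle_trans; [apply Rplus_le_compat_r, Rabs_triang|]. rewrite Rabs_Ropp, !Rabs_mult.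
  pose proof (Rmult_le_compat_l _ _ _ (Rabs_pos a) E1).
  pose proof (Rmult_le_compat_l _ _ _ (Rabs_pos b) E2) as E2'.
  rewrite (Rplus_comm (Rabs q) (Rabs p)) in E2'. nra.
Qed.

Lemma sol_curve_of_state a b C al be (Z : R -> nat -> R) :
  Rbar_lt al be ->
  (forall s, in_ival al be s ->
     (forall i, (i < 4)%nat -> is_derive (fun t => Z t i) s (curve_field a b C (Z s) i)) /\
     lor (state_tan (Z s)) (state_tan (Z s)) = 1) ->
  sol_curve a b C al be (fun t => state_pos (Z t)) (fun t => state_tan (Z t))
    (fun t => curvature a b C (Z t)).
Proof.
  intros Hab HZ. split; [exact Hab|]. intros s Hs.
  destruct (HZ s Hs) as [Hd Hl]. unfold state_pos, state_tan, hmul; simpl.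
  split; [apply (Hd 0%nat); lia|]. split; [apply (Hd 1%nat); lia|]. split; [exact Hl|].
  split; [apply (Hd 2%nat); lia|]. split; [apply (Hd 3%nat); lia|]. reflexivity.
Qed.

Lemma le_before_of_quadratic_derive_bound (Q dQ : R -> R) A t1 d :
  0 < A -> 0 <= d -> A * d <= 1/4 -> Q t1 < 1/4 ->
  (forall x, t1 - d <= x <= t1 ->
     0 < Q x /\ is_derive Q x (dQ x) /\ Rabs (dQ x) <= A * (1 + Q x ^ 2)) ->
  forall t, t1 - d <= t <= t1 -> Q t <= 2 * (Q t1 + A * (t1 - t)).
Proof.
  intros HA Hd HAd Hq H t Ht.
  (* [|(1 / (1 + Q))'| = |Q'| / (1 + Q)^2 <= A] *)
  assert (Hr : A * t - / (1 + Q t) <= A * t1 - / (1 + Q t1)).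
  { apply (le_of_is_derive_nonneg (fun u => A * u - / (1 + Q u))
      (fun u => A * 1 - (- dQ u / (1 + Q u) ^ 2))); [lra|].
    intros x Hx. destruct (H x ltac:(lra)) as [HQ [HdQ HdQb]]. split.
    - apply (is_derive_minus (fun u => A * u));
        [apply (is_derive_scal (fun u => u)); exact (is_derive_id x)|].
      apply (is_derive_inv (fun u => 1 + Q u)); [|lra].
      rewrite <- (Rplus_0_l (dQ x)).
      apply (is_derive_plus (fun _ => 1)); [exact (is_derive_const 1 x)|exact HdQ].
    - apply Rabs_le_between in HdQb.
      assert (0 < (1 + Q x) ^ 2) by (apply pow_lt; lra).
      enough (- dQ x / (1 + Q x) ^ 2 <= A) by lra.
      apply (Rmult_le_reg_r ((1 + Q x) ^ 2)); [assumption|].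
      unfold Rdiv. rewrite Rmult_assoc, Rinv_l by lra. nra. }
  destruct (H t Ht) as [HQt _]. destruct (H t1 ltac:(lra)) as [Hq0 _].
  set (w := Q t1 + A * (t1 - t)).
  assert (Hw : 0 < w <= 1/2) by (unfold w; split; nra).
  assert (/ (1 + Q t1) >= 1 - Q t1)
    by (apply Rle_ge, (Rmult_le_reg_r (1 + Q t1)); [lra|]; field_simplify; nra).
  assert (Hinv : 1 - w <= / (1 + Q t)) by (unfold w; lra).
  apply (Rmult_le_compat_r (1 + Q t)) in Hinv; [|lra].
  rewrite Rinv_l in Hinv by lra. nra.
Qed.

Lemma le_primitive_inv_log (Q V : R -> R) q A t1 d : 0 < A -> 0 < q -> 0 <= d ->
  (forall x, t1 - d <= x <= t1 ->
     0 < Q x /\ is_derive V x (/ Q x) /\ Q x <= 2 * (q + A * (t1 - x))) ->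
  V (t1 - d) + / (2 * A) * ln (q + A * d) <= V t1 + / (2 * A) * ln q.
Proof.
  intros HA Hq Hd H.
  replace (ln (q + A * d)) with (ln (q + A * (t1 - (t1 - d)))) by (f_equal; ring).
  replace (ln q) with (ln (q + A * (t1 - t1))) by (f_equal; ring).
  apply (le_of_is_derive_nonneg (fun u => V u + / (2 * A) * ln (q + A * (t1 - u)))
    (fun u => / Q u - / (2 * (q + A * (t1 - u))))); [lra|].
  intros x Hx. destruct (H x Hx) as [HQx [HV Hbound]].
  assert (0 < q + A * (t1 - x)) by nra. split.
  - replace (/ Q x - / (2 * (q + A * (t1 - x))))
      with (/ Q x + / (2 * A) * (- A / (q + A * (t1 - x)))) by (field; lra).
    apply (is_derive_plus V); [exact HV|].
    apply (is_derive_scal (fun u => ln (q + A * (t1 - u)))). auto_derive; [lra|field; lra].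
  - assert (/ (2 * (q + A * (t1 - x))) <= / Q x) by (apply Rinv_le_contravar; lra). lra.
Qed.

(* If [Q] dropped to a tiny value [q] at [t1], the bound on [Q'] keeps [Q <= 2 (q + A (t1 - t))]
   on a time interval of fixed length before [t1], and then [V' = 1/Q] integrates to about
   [ln (1/q) / (2A)], contradicting the bound on [V]. *)
Lemma bounded_below_of_bounded_primitive_inv (Q dQ V : R -> R) A K s0 B :
  s0 < B -> 0 < A ->
  (forall t, s0 <= t < B ->
     0 < Q t /\ is_derive Q t (dQ t) /\ Rabs (dQ t) <= A * (1 + Q t ^ 2) /\
     is_derive V t (/ Q t) /\ Rabs (V t) <= K) ->
  exists c beta, s0 <= c < B /\ 0 < beta /\ forall t, c <= t < B -> beta <= Q t.
Proof.
  intros HsB HA H.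
  set (d := Rmin (/ (4 * A)) ((B - s0) / 2)).
  assert (Hd0 : 0 < d) by (apply Rmin_pos; [apply Rinv_0_lt_compat|]; lra).
  assert (HAd : A * d <= 1/4).
  { apply Rle_trans with (A * / (4 * A)); [apply Rmult_le_compat_l; [lra|apply Rmin_l]|].
    right. field. lra. }
  assert (HdB : d <= (B - s0) / 2) by apply Rmin_r.
  set (beta := Rmin (1/4) (A * d * exp (- (4 * A * K)))).
  exists (s0 + d), beta. split; [lra|]. split.
  { apply Rmin_pos; [lra|]. apply Rmult_lt_0_compat; [nra|apply exp_pos]. }
  intros t1 Ht1. set (q := Q t1).
  destruct (Rlt_or_le q (1/4)) as [Hq|Hq]; [|apply Rle_trans with (1/4); [apply Rmin_l|exact Hq]].
  apply Rle_trans with (A * d * exp (- (4 * A * K))); [apply Rmin_r|].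
  assert (Hq0 : 0 < q) by (apply H; lra).
  assert (Hbound : forall t, t1 - d <= t <= t1 -> Q t <= 2 * (q + A * (t1 - t))).
  { apply (le_before_of_quadratic_derive_bound Q dQ); [lra|lra|lra|exact Hq|].
    intros x Hx. destruct (H x ltac:(lra)) as [? [? [? _]]]. auto. }
  assert (Hgrowth : V (t1 - d) + / (2 * A) * ln (q + A * d) <= V t1 + / (2 * A) * ln q).
  { apply (le_primitive_inv_log Q); [lra|lra|lra|].
    intros x Hx. destruct (H x ltac:(lra)) as [? [_ [_ [? _]]]]. auto. }
  destruct (H (t1 - d) ltac:(lra)) as [_ [_ [_ [_ HV1]]]].
  destruct (H t1 ltac:(lra)) as [_ [_ [_ [_ HV2]]]].
  apply Rabs_le_between in HV1. apply Rabs_le_between in HV2.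
  assert (Hln : ln (A * d) - 4 * A * K <= ln q).
  { assert (ln (A * d) <= ln (q + A * d)) by (apply ln_le; nra).
    assert (Hdiff : / (2 * A) * (ln (q + A * d) - ln q) <= 2 * K) by lra.
    apply (Rmult_le_compat_l (2 * A)) in Hdiff; [|lra].
    rewrite <- Rmult_assoc, Rinv_r, Rmult_1_l in Hdiff by lra. nra. }
  assert (Hpos : 0 < A * d * exp (- (4 * A * K))) by (apply Rmult_lt_0_compat; [nra|apply exp_pos]).
  destruct (Rle_or_lt (A * d * exp (- (4 * A * K))) q) as [|Hlt]; [assumption|exfalso].
  apply ln_increasing in Hlt; [|assumption].
  rewrite ln_mult, ln_exp in Hlt by (try apply exp_pos; nra). lra.
Qed.

Lemma in_ival_nonempty al be : Rbar_lt al be -> exists s, in_ival al be s.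
Proof.
  unfold in_ival. destruct al as [a| |], be as [b| |]; simpl; intros H; try tauto.
  - exists ((a + b) / 2). lra.
  - exists (a + 1). lra.
  - exists (b - 1). lra.
  - exists 0. auto.
Qed.

Lemma in_ival_between al be s s' u :
  in_ival al be s -> in_ival al be s' -> s <= u <= s' -> in_ival al be u.
Proof. unfold in_ival. destruct al, be; simpl; intros; lra. Qed.

Lemma in_ival_opp al be s : in_ival (Rbar_opp be) (Rbar_opp al) s <-> in_ival al be (- s).
Proof. unfold in_ival. destruct al, be; simpl; split; intros; lra. Qed.

Lemma Rabs_sign sg : sg = 1 \/ sg = -1 -> Rabs sg = 1.
Proof. intros [-> | ->]; [apply Rabs_R1|rewrite Rabs_left by lra; ring]. Qed.

Lemma sign_abs sg x : sg = 1 \/ sg = -1 -> Rabs (sg * x) = Rabs x.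
Proof. intros H. rewrite Rabs_mult, Rabs_sign by exact H. ring. Qed.

Lemma in_ival_up_to al be B s0 t :
  be = Finite B -> in_ival al be s0 -> s0 <= t < B -> in_ival al be t.
Proof.
  intros HB [H1 H2] Ht. rewrite HB in *.
  split; [eapply Rbar_lt_le_trans; [exact H1|simpl; lra]|simpl; lra].
Qed.

Definition curve_state (X T : R -> R * R) (t : R) : nat -> R :=
  fun i => match i with
           | 0%nat => fst (X t) | 1%nat => snd (X t) | 2%nat => fst (T t) | _ => snd (T t)
           end.

Lemma curve_field_ext a b C z w i : (forall j, (j < 4)%nat -> z j = w j) ->
  curve_field a b C z i = curve_field a b C w i.
Proof.
  intros H. unfold curve_field, curvature, state_pos, state_tan.
  rewrite !H by lia. reflexivity.
Qed.

Lemma field_solution_lorentz a b C (phi : R -> nat -> R) s1 s2 :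
  (forall t i, (i < 4)%nat -> s1 < t < s2 ->
     is_derive (fun u => phi u i) t (curve_field a b C (phi t) i)) ->
  forall t u, s1 < t < s2 -> s1 < u < s2 ->
  lor (state_tan (phi t)) (state_tan (phi t)) = lor (state_tan (phi u)) (state_tan (phi u)).
Proof.
  intros Hd t u Ht Hu. unfold lor, state_tan; simpl.
  apply (eq_of_is_derive_zero (fun v => phi v 2%nat * phi v 2%nat - phi v 3%nat * phi v 3%nat)).
  intros x Hx. assert (Hx' : s1 < x < s2) by (unfold Rmin, Rmax in Hx; destruct Rle_dec; lra).
  pose proof (Hd x 2%nat ltac:(lia) Hx') as D2. pose proof (Hd x 3%nat ltac:(lia) Hx') as D3.
  set (F := curve_field a b C (phi x)).
  replace 0 with (F 2%nat * phi x 2%nat + phi x 2%nat * F 2%nat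
                  - (F 3%nat * phi x 3%nat + phi x 3%nat * F 3%nat)) by (unfold F; simpl; ring).
  apply (is_derive_minus (fun v => phi v 2%nat * phi v 2%nat));
    apply (is_derive_mult (fun v => phi v _)); try assumption; intros; apply Rmult_comm.
Qed.

Section Solution.

Variables (a b : R) (C : R * R) (al be : Rbar) (X T : R -> R * R) (k : R -> R).
Hypothesis Hsol : sol_curve a b C al be X T k.

Lemma sol_interval : Rbar_lt al be.
Proof. apply Hsol. Qed.

Lemma sol_derive_x s : in_ival al be s -> is_derive (fun t => fst (X t)) s (fst (T s)).
Proof. intros Hs. apply (proj2 Hsol s Hs). Qed.

Lemma sol_derive_y s : in_ival al be s -> is_derive (fun t => snd (X t)) s (snd (T s)).
Proof. intros Hs. apply (proj2 Hsol s Hs). Qed.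

Lemma sol_derive_T1 s : in_ival al be s -> is_derive (fun t => fst (T t)) s (k s * snd (T s)).
Proof. intros Hs. apply (proj2 Hsol s Hs). Qed.

Lemma sol_derive_T2 s : in_ival al be s -> is_derive (fun t => snd (T t)) s (k s * fst (T s)).
Proof. intros Hs. apply (proj2 Hsol s Hs). Qed.

Lemma sol_spacelike s : in_ival al be s -> fst (T s) * fst (T s) - snd (T s) * snd (T s) = 1.
Proof. intros Hs. apply (proj2 Hsol s Hs). Qed.

Lemma sol_curvature s : in_ival al be s -> k s = curvature a b C (curve_state X T s).
Proof.
  intros Hs. destruct (proj2 Hsol s Hs) as [_ [_ [_ [_ [_ E]]]]].
  rewrite <- E. unfold curvature, state_pos, state_tan. reflexivity.
Qed.

Lemma curve_state_derive s i : in_ival al be s -> (i < 4)%nat ->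
  is_derive (fun t => curve_state X T t i) s (curve_field a b C (curve_state X T s) i).
Proof.
  intros Hs Hi. destruct i as [|[|[|[|]]]]; try lia; simpl.
  - apply sol_derive_x, Hs.
  - apply sol_derive_y, Hs.
  - rewrite <- sol_curvature by exact Hs. apply sol_derive_T1, Hs.
  - rewrite <- sol_curvature by exact Hs. apply sol_derive_T2, Hs.
Qed.

Lemma curve_state_continuous s i : in_ival al be s -> (i < 4)%nat ->
  continuity_pt (fun t => curve_state X T t i) s.
Proof.
  intros Hs Hi.
  apply continuity_pt_filterlim, (ex_derive_continuous (fun t => curve_state X T t i)).
  eexists. apply curve_state_derive; assumption.
Qed.

Lemma local_continuation B c r : be = Finite B -> in_ival al be c ->
  (forall t, c <= t < B -> state_bounded r (curve_state X T t)) ->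
  exists s1 B' (phi : R -> nat -> R), c <= s1 < B /\ B < B' /\
    (forall t i, (i < 4)%nat -> s1 < t < B' ->
       is_derive (fun u => phi u i) t (curve_field a b C (phi t) i)) /\
    (forall t i, (i < 4)%nat -> s1 <= t < B -> phi t i = curve_state X T t i).
Proof.
  intros HB Hc Hbd.
  destruct (curve_field_bounds a b C (r + 1)) as [M [L [HM [HL [Fb Fl]]]]].
  set (h := / (M + 2 * L + 1)).
  assert (Hh : 0 < h) by (apply Rinv_0_lt_compat; lra).
  assert (Hh1 : h * (M + 2 * L + 1) = 1) by (unfold h; field; lra).
  set (s1 := Rmax c (B - h / 4)).
  assert (Hs1 : c <= s1 < B /\ B - s1 <= h / 4).
  { assert (c < B) by (destruct Hc as [_ Hc]; rewrite HB in Hc; exact Hc).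
    unfold s1, Rmax. destruct Rle_dec; lra. }
  set (z0 := curve_state X T s1).
  assert (Hz0 : state_bounded r z0) by (apply Hbd; lra).
  assert (Hball : forall z, dist_le 4 z z0 1 -> state_bounded (r + 1) z)
    by (intros; eapply state_bounded_of_dist_le; eassumption).
  destruct (picard_lindelof 4 (curve_field a b C) z0 s1 h M L) as [phi [Pbox [Plip [P0 Pder]]]];
    try nra.
  { intros z Hz. apply Fb, Hball, Hz. }
  { intros z w d Hz Hw. apply Fl; apply Hball; assumption. }
  assert (Hin : forall t, c <= t < B -> in_ival al be t) by (intros; eapply in_ival_up_to; eauto).
  exists s1, (s1 + h), phi. split; [lra|]. split; [lra|]. split; [exact Pder|].
  intros t i Hi Ht.
  symmetry. apply (ode_solution_unique 4 (curve_field a b C) z0 L (curve_state X T) phi s1 t);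
    [lra|nra|lra|intros z w d Hz Hw; apply Fl; apply Hball; assumption| | | | |exact Hi|lra].
  - intros u Hu. split; [|apply Pbox].
    apply (dist_le_weaken _ _ _ (M * (u - s1))); [|nra].
    apply (dist_le_of_derive_bound _ _ (fun u => curve_field a b C (curve_state X T u)));
      [lra|]. intros v j Hj Hv. split; [apply curve_state_derive; [apply Hin; lra|exact Hj]|].
    apply Fb; [|exact Hj]. apply (state_bounded_weaken r); [apply Hbd; lra|lra].
  - intros j Hj. symmetry. apply P0, Hj.
  - intros u j Hj Hu.
    split; [apply curve_state_derive; [apply Hin; lra|exact Hj]|apply Pder; [exact Hj|lra]].
  - intros u j Hj Hu.
    apply continuity_pt_minus; [apply curve_state_continuous; [apply Hin; lra|exact Hj]|].
    apply continuity_pt_filterlim, (lipschitz_continuous (fun v => phi v j) M).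
    intros x y. apply Plip, Hj.
Qed.

Lemma extension_past_finite_end B c r : be = Finite B -> in_ival al be c ->
  (forall t, c <= t < B -> state_bounded r (curve_state X T t)) ->
  exists B' X' T' k', B < B' /\ sol_curve a b C al (Finite B') X' T' k' /\
    forall s, in_ival al be s -> X' s = X s.
Proof.
  intros HB Hc Hbd.
  destruct (local_continuation B c r HB Hc Hbd) as [s1 [B' [phi [Hs1 [HB' [Pder Pagree]]]]]].
  assert (Hin : forall s, in_ival al be s <-> Rbar_lt al (Finite s) /\ s < B)
    by (intros s; unfold in_ival; rewrite HB; reflexivity).
  assert (Hs1in : in_ival al be s1) by (apply (in_ival_up_to _ _ B c); [exact HB|exact Hc|lra]).
  set (Z := fun t => if Rlt_dec t B then curve_state X T t else phi t).
  assert (ZX : forall s, s < B -> Z s = curve_state X T s)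
    by (intros s Hs; unfold Z; destruct Rlt_dec; [reflexivity|lra]).
  assert (Zphi : forall s i, (i < 4)%nat -> s1 <= s -> Z s i = phi s i).
  { intros s i Hi Hs. unfold Z.
    destruct Rlt_dec; [symmetry; apply Pagree; [exact Hi|lra]|reflexivity]. }
  exists B', (fun t => state_pos (Z t)), (fun t => state_tan (Z t)),
    (fun t => curvature a b C (Z t)).
  split; [exact HB'|]. split.
  - apply sol_curve_of_state; [eapply Rbar_lt_trans; [apply Hs1in|simpl; lra]|].
    intros s [Hs Hs']. simpl in Hs'. destruct (Rlt_or_le s B) as [HsB|HsB].
    + assert (Hsi : in_ival al be s) by (apply Hin; split; assumption).
      rewrite ZX by exact HsB. split; [|exact (sol_spacelike s Hsi)].
      intros i Hi. apply (is_derive_ext_loc (fun t => curve_state X T t i)).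
      * apply (locally_interval _ s m_infty B); [exact I|exact HsB|].
        intros y _ Hy. rewrite ZX by exact Hy. reflexivity.
      * apply curve_state_derive; assumption.
    + assert (Hphi : forall i, (i < 4)%nat ->
                 is_derive (fun t => Z t i) s (curve_field a b C (phi s) i)).
      { intros i Hi. apply (is_derive_ext_loc (fun t => phi t i)); [|apply Pder; [exact Hi|lra]].
        apply (locally_interval _ s s1 B'); simpl; try lra.
        intros y Hy _. symmetry. apply Zphi; [exact Hi|lra]. }
      split.
      * intros i Hi. rewrite (curve_field_ext _ _ _ (Z s) (phi s)); [apply Hphi, Hi|].
        intros j Hj. apply Zphi; [exact Hj|lra].
      * assert (Hu : in_ival al be ((s1 + B) / 2))
          by (apply (in_ival_up_to _ _ B c); [exact HB|exact Hc|lra]).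
        unfold state_tan. rewrite !(Zphi s) by (lia || lra).
        change (lor (state_tan (phi s)) (state_tan (phi s)) = 1).
        rewrite (field_solution_lorentz _ _ _ phi s1 B' Pder s ((s1 + B) / 2)) by lra.
        unfold state_tan. rewrite !Pagree by (lia || lra). apply (sol_spacelike _ Hu).
  - intros s Hs. assert (s < B) by (apply Hin, Hs).
    rewrite ZX by assumption. unfold state_pos. simpl. symmetry. apply surjective_pairing.
Qed.

Lemma tangent_abs_lt s : in_ival al be s -> Rabs (snd (T s)) < Rabs (fst (T s)).
Proof.
  intros Hs. pose proof (sol_spacelike s Hs).
  apply Rsqr_incrst_0; [|apply Rabs_pos|apply Rabs_pos].
  unfold Rsqr. rewrite <- !Rabs_mult, !Rabs_pos_eq by nra. lra.
Qed.

Lemma tangent_sign :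
  exists sg, (sg = 1 \/ sg = -1) /\ forall s, in_ival al be s -> 0 < sg * fst (T s).
Proof.
  destruct (in_ival_nonempty _ _ sol_interval) as [s0 Hs0].
  assert (Hnz : forall s, in_ival al be s -> fst (T s) <> 0).
  { intros s Hs E. pose proof (tangent_abs_lt s Hs) as H. rewrite E, Rabs_R0 in H.
    pose proof (Rabs_pos (snd (T s))). lra. }
  exists (if Rlt_dec 0 (fst (T s0)) then 1 else -1).
  set (sg := if Rlt_dec 0 (fst (T s0)) then 1 else -1).
  assert (Hsg : sg = 1 \/ sg = -1) by (unfold sg; destruct Rlt_dec; auto).
  assert (Hs0p : 0 < sg * fst (T s0)).
  { specialize (Hnz s0 Hs0). unfold sg; destruct Rlt_dec; [lra|].
    destruct (Rtotal_order 0 (fst (T s0))) as [|[|]]; lra. }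
  split; [exact Hsg|]. intros s Hs.
  destruct (Rlt_or_le 0 (sg * fst (T s))) as [|Hle]; [assumption|exfalso].
  (* otherwise [T1] vanishes between [s0] and [s] *)
  assert (Hc : forall u, Rmin s0 s <= u <= Rmax s0 s -> continuity_pt (fun t => sg * fst (T t)) u).
  { intros u Hu. apply continuity_pt_scal.
    apply (curve_state_continuous u 2); [|lia].
    unfold Rmin, Rmax in Hu. destruct Rle_dec;
      [apply (in_ival_between _ _ s0 s)|apply (in_ival_between _ _ s s0)]; auto; lra. }
  destruct (Rle_or_lt s0 s) as [Hss|Hss].
  - destruct (IVT_le (fun t => - (sg * fst (T t))) s0 s Hss) as [z [Hz1 Hz2]]; [|lra|].
    + intros u Hu. apply continuity_pt_opp, Hc. rewrite Rmin_left, Rmax_right; lra.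
    + apply (Hnz z); [apply (in_ival_between _ _ s0 s); auto|].
      destruct Hsg as [E|E]; rewrite E in Hz2; lra.
  - destruct (IVT_le (fun t => sg * fst (T t)) s s0) as [z [Hz1 Hz2]]; [lra| |lra|].
    + intros u Hu. apply Hc. rewrite Rmin_right, Rmax_left; lra.
    + apply (Hnz z); [apply (in_ival_between _ _ s s0); auto|].
      destruct Hsg as [E|E]; rewrite E in Hz2; lra.
Qed.

Variable sg : R.
Hypothesis Hsg : sg = 1 \/ sg = -1.
Hypothesis Hsg_pos : forall s, in_ival al be s -> 0 < sg * fst (T s).

Lemma tangent_dominant s : in_ival al be s ->
  Rabs (snd (T s)) < sg * fst (T s) /\ 1 <= sg * fst (T s).
Proof.
  intros Hs. pose proof (sol_spacelike s Hs). pose proof (Hsg_pos s Hs).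
  assert (E : (sg * fst (T s)) * (sg * fst (T s)) = fst (T s) * fst (T s))
    by (destruct Hsg as [-> | ->]; ring).
  split; [|nra].
  apply Rsqr_incrst_0; [|apply Rabs_pos|lra].
  unfold Rsqr. rewrite <- Rabs_mult, Rabs_pos_eq by nra. nra.
Qed.

Lemma x_dominates s s' : in_ival al be s -> in_ival al be s' -> s <= s' ->
  s' - s <= sg * fst (X s') - sg * fst (X s) /\
  Rabs (snd (X s') - snd (X s)) <= sg * fst (X s') - sg * fst (X s).
Proof.
  intros Hs Hs' Hss.
  assert (Hin : forall u, s <= u <= s' -> in_ival al be u)
    by (intros; apply (in_ival_between _ _ s s'); auto).
  assert (Hmono : forall e c, (forall u, in_ival al be u -> e * snd (T u) + c <= sg * fst (T u)) ->
            sg * fst (X s) - e * snd (X s) - c * s <= sg * fst (X s') - e * snd (X s') - c * s').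
  { intros e c He.
    apply (le_of_is_derive_nonneg (fun t => sg * fst (X t) - e * snd (X t) - c * t)
      (fun u => sg * fst (T u) - e * snd (T u) - c * 1)); [exact Hss|].
    intros x Hx. split; [|specialize (He x (Hin x Hx)); lra].
    apply (is_derive_minus _ (fun t => c * t));
      [apply (is_derive_minus (fun t => sg * fst (X t)) (fun t => e * snd (X t)))|].
    - apply (is_derive_scal (fun t => fst (X t))), sol_derive_x, Hin, Hx.
    - apply (is_derive_scal (fun t => snd (X t))), sol_derive_y, Hin, Hx.
    - apply (is_derive_scal (fun t => t)). exact (is_derive_id x). }
  pose proof (Hmono 0 1 ltac:(intros u Hu; destruct (tangent_dominant u Hu); lra)).
  pose proof (Hmono 1 0 ltac:(intros u Hu; destruct (tangent_dominant u Hu);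
                              pose proof (Rle_abs (snd (T u))); lra)).
  pose proof (Hmono (-1) 0 ltac:(intros u Hu; destruct (tangent_dominant u Hu);
                                 pose proof (Rle_abs (- snd (T u))); rewrite Rabs_Ropp in *; lra)).
  split; [lra|]. apply Rabs_le. lra.
Qed.

Lemma x_expanding s s' : in_ival al be s -> in_ival al be s' ->
  Rabs (s - s') <= Rabs (fst (X s) - fst (X s')).
Proof.
  intros Hs Hs'.
  rewrite <- (sign_abs sg (fst (X s) - fst (X s'))) by exact Hsg.
  replace (sg * (fst (X s) - fst (X s'))) with (sg * fst (X s) - sg * fst (X s')) by ring.
  destruct (Rle_or_lt s s') as [H|H].
  - destruct (x_dominates s s' Hs Hs' H) as [Hx _].
    rewrite (Rabs_minus_sym s), Rabs_pos_eq by lra.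
    eapply Rle_trans; [|rewrite Rabs_minus_sym; apply Rle_abs]. lra.
  - destruct (x_dominates s' s Hs' Hs ltac:(lra)) as [Hx _].
    rewrite Rabs_pos_eq by lra. eapply Rle_trans; [|apply Rle_abs]. lra.
Qed.

Lemma position_bounded_near_end B K : be = Finite B ->
  (forall s, in_ival al be s -> sg * fst (X s) < K) ->
  exists s0 RX, in_ival al be s0 /\ 0 <= RX /\
    forall t, s0 <= t < B -> Rabs (fst (X t)) <= RX /\ Rabs (snd (X t)) <= RX.
Proof.
  intros HB Hbd. destruct (in_ival_nonempty _ _ sol_interval) as [s0 Hs0].
  exists s0, (Rabs (fst (X s0)) + Rabs (snd (X s0)) + Rabs K).
  pose proof (Rabs_pos (fst (X s0))). pose proof (Rabs_pos (snd (X s0))). pose proof (Rabs_pos K).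
  split; [exact Hs0|]. split; [lra|]. intros t Ht.
  assert (Hti : in_ival al be t) by (apply (in_ival_up_to _ _ B s0); assumption).
  destruct (x_dominates s0 t Hs0 Hti (proj1 Ht)) as [Hx Hy].
  pose proof (Hbd t Hti). pose proof (Rle_abs K).
  pose proof (Rle_abs (- (sg * fst (X s0)))). rewrite Rabs_Ropp, sign_abs in * by exact Hsg.
  assert (Hxt : Rabs (sg * fst (X t)) <= Rabs (fst (X s0)) + Rabs K) by (apply Rabs_le; lra).
  rewrite sign_abs in Hxt by exact Hsg. split; [lra|].
  replace (snd (X t)) with (snd (X s0) + (snd (X t) - snd (X s0))) by ring.
  eapply Rle_trans; [apply Rabs_triang|lra].
Qed.

(* Light-cone coordinates of the tangent: [null_coord 1 * null_coord (-1) = <T, T> = 1]. *)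
Definition null_coord (e s : R) : R := sg * (fst (T s) + e * snd (T s)).

Lemma null_coord_spec e s : e = 1 \/ e = -1 -> in_ival al be s ->
  0 < null_coord e s /\ null_coord e s * null_coord (- e) s = 1 /\
  Rabs (fst (T s)) + Rabs (snd (T s)) <= null_coord e s + null_coord (- e) s.
Proof.
  intros He Hs. unfold null_coord.
  destruct (tangent_dominant s Hs) as [H1 H2]. pose proof (sol_spacelike s Hs).
  pose proof (Rle_abs (snd (T s))). pose proof (Rle_abs (- snd (T s))). rewrite Rabs_Ropp in *.
  assert (Rabs (fst (T s)) = sg * fst (T s))
    by (rewrite <- (sign_abs sg) by exact Hsg; apply Rabs_pos_eq; lra).
  destruct He as [-> | ->], Hsg as [-> | ->]; repeat split; nra.
Qed.

Lemma null_coord_derive e s : e = 1 \/ e = -1 -> in_ival al be s ->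
  is_derive (null_coord e) s (e * k s * null_coord e s).
Proof.
  intros He Hs. unfold null_coord.
  replace (e * k s * (sg * (fst (T s) + e * snd (T s))))
    with (sg * (k s * snd (T s) + e * (k s * fst (T s)))) by (destruct He as [-> | ->]; ring).
  apply (is_derive_scal (fun t => fst (T t) + e * snd (T t))).
  apply (is_derive_plus (fun t => fst (T t))); [apply sol_derive_T1, Hs|].
  apply (is_derive_scal (fun t => snd (T t))), sol_derive_T2, Hs.
Qed.

Lemma null_coord_bounded_below e B K : e = 1 \/ e = -1 -> be = Finite B ->
  (forall s, in_ival al be s -> sg * fst (X s) < K) ->
  exists c beta, in_ival al be c /\ 0 < beta /\ forall t, c <= t < B -> beta <= null_coord e t.
Proof.
  intros He HB Hbd.
  destruct (position_bounded_near_end B K HB Hbd) as [s0 [RX [Hs0 [HRX HX]]]].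
  set (A0 := (Rabs a + Rabs b) * RX + Rabs (fst C) + Rabs (snd C)).
  assert (HA0 : 0 <= A0).
  { pose proof (Rabs_pos a). pose proof (Rabs_pos b).
    pose proof (Rabs_pos (fst C)). pose proof (Rabs_pos (snd C)). unfold A0. nra. }
  assert (Hs0B : s0 < B) by (destruct Hs0 as [_ H]; rewrite HB in H; exact H).
  destruct (bounded_below_of_bounded_primitive_inv (null_coord e)
    (fun t => e * k t * null_coord e t) (fun t => sg * (fst (X t) - e * snd (X t)))
    (A0 + 1) (2 * RX) s0 B) as [c [beta [Hc [Hbeta Hlow]]]]; [exact Hs0B|lra| |].
  2:{ exists c, beta. split; [apply (in_ival_up_to _ _ B s0); [exact HB|exact Hs0|lra]|]. auto. }
  intros t Ht. assert (Hti : in_ival al be t) by (apply (in_ival_up_to _ _ B s0); assumption).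
  destruct (null_coord_spec e t He Hti) as [HQ [HQQ HT]].
  destruct (HX t Ht) as [Hx Hy].
  split; [exact HQ|]. split; [apply null_coord_derive; assumption|]. split.
  - (* [|k| <= A0 (|T1| + |T2|)], and [|T1| + |T2| <= Q + 1/Q] *)
    pose proof (curvature_bound a b C (curve_state X T t) RX Hx Hy) as Hk.
    rewrite <- sol_curvature in Hk by exact Hti. simpl in Hk.
    rewrite !Rabs_mult, (Rabs_pos_eq (null_coord e t)) by lra.
    rewrite (Rabs_sign e He).
    assert (Rabs (k t) <= A0 * (null_coord e t + null_coord (- e) t)).
    { eapply Rle_trans; [exact Hk|]. apply Rmult_le_compat_l; assumption. }
    pose proof (Rabs_pos (k t)). simpl. nra.
  - split.
    + replace (/ null_coord e t) with (sg * (fst (T t) - e * snd (T t))).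
      2:{ apply (Rmult_eq_reg_l (null_coord e t)); [|lra]. rewrite Rinv_r by lra.
          rewrite <- HQQ. unfold null_coord. ring. }
      apply (is_derive_scal (fun u => fst (X u) - e * snd (X u))).
      apply (is_derive_minus (fun u => fst (X u))); [apply sol_derive_x, Hti|].
      apply (is_derive_scal (fun u => snd (X u))), sol_derive_y, Hti.
    + rewrite sign_abs by exact Hsg. unfold Rminus. eapply Rle_trans; [apply Rabs_triang|].
      rewrite Rabs_Ropp, Rabs_mult.
      rewrite (Rabs_sign e He).
      lra.
Qed.

Lemma state_bounded_near_end B K : be = Finite B ->
  (forall s, in_ival al be s -> sg * fst (X s) < K) ->
  exists c r, in_ival al be c /\ forall t, c <= t < B -> state_bounded r (curve_state X T t).
Proof.
  intros HB Hbd.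
  destruct (position_bounded_near_end B K HB Hbd) as [s0 [RX [Hs0 [HRX HX]]]].
  destruct (null_coord_bounded_below 1 B K ltac:(auto) HB Hbd) as [c1 [b1 [Hc1 [Hb1 H1]]]].
  destruct (null_coord_bounded_below (-1) B K ltac:(auto) HB Hbd) as [c2 [b2 [Hc2 [Hb2 H2]]]].
  set (c := Rmax s0 (Rmax c1 c2)).
  assert (Hc : in_ival al be c).
  { unfold c, Rmax. repeat destruct Rle_dec; assumption. }
  exists c, (RX + / b1 + / b2). split; [exact Hc|].
  intros t Ht.
  assert (Hle : s0 <= c /\ c1 <= c /\ c2 <= c) by (unfold c, Rmax; repeat destruct Rle_dec; lra).
  assert (Hti : in_ival al be t) by (apply (in_ival_up_to _ _ B c); assumption).
  destruct (HX t ltac:(lra)) as [Hx Hy].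
  destruct (null_coord_spec 1 t ltac:(auto) Hti) as [P1 [PQ HT]].
  replace (- (1)) with (-1) in * by ring.
  specialize (H1 t ltac:(lra)). specialize (H2 t ltac:(lra)).
  assert (null_coord 1 t <= / b2).
  { replace (null_coord 1 t) with (/ null_coord (-1) t) by (field_simplify_eq; lra).
    apply Rinv_le_contravar; lra. }
  assert (null_coord (-1) t <= / b1).
  { replace (null_coord (-1) t) with (/ null_coord 1 t) by (field_simplify_eq; lra).
    apply Rinv_le_contravar; lra. }
  pose proof (Rabs_pos (fst (T t))). pose proof (Rabs_pos (snd (T t))).
  pose proof (Rinv_0_lt_compat _ Hb1). pose proof (Rinv_0_lt_compat _ Hb2).
  intros i Hi. destruct i as [|[|[|[|]]]]; try lia; simpl; lra.
Qed.

Lemma x_unbounded_above : maximal_sol a b C al be X ->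
  forall K, exists s, in_ival al be s /\ K <= sg * fst (X s).
Proof.
  intros Hmax K. apply NNPP. intros Hno.
  assert (Hbd : forall s, in_ival al be s -> sg * fst (X s) < K)
    by (intros s Hs; apply Rnot_le_lt; intros HK; apply Hno; exists s; auto).
  destruct (in_ival_nonempty _ _ sol_interval) as [s0 Hs0].
  assert (Hcases : (exists B, be = Finite B) \/ be = p_infty \/ be = m_infty)
    by (destruct be; eauto).
  destruct Hcases as [[B HB]|[HB|HB]].
  - destruct (state_bounded_near_end B K HB Hbd) as [c [r [Hc Hr]]].
    destruct (extension_past_finite_end B c r HB Hc Hr) as [B' [X' [T' [k' [HB' [Hs' Hagr]]]]]].
    apply Hmax. exists al, (Finite B'), X', T', k'. rewrite HB.
    split; [exact Hs'|]. split; [apply Rbar_le_refl|]. split; [simpl; lra|].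
    split; [right; intros E; injection E; lra|rewrite <- HB; exact Hagr].
  - (* on an unbounded parameter interval, [sg x] grows at least like the arc length *)
    set (s := s0 + Rabs (K - sg * fst (X s0)) + 1).
    pose proof (Rabs_pos (K - sg * fst (X s0))). pose proof (Rle_abs (K - sg * fst (X s0))).
    assert (Hs : in_ival al be s).
    { split; [eapply Rbar_lt_le_trans; [apply Hs0|simpl; unfold s; lra]|rewrite HB; exact I]. }
    destruct (x_dominates s0 s Hs0 Hs ltac:(unfold s; lra)) as [Hx _].
    specialize (Hbd s Hs). unfold s in *. lra.
  - pose proof sol_interval as Hab. rewrite HB in Hab. destruct al; contradiction.
Qed.

End Solution.

Lemma is_derive_reverse (f : R -> R) s d :
  is_derive f (- s) d -> is_derive (fun t => f (- t)) s (- d).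
Proof.
  intros H. replace (- d) with (scal (- (1)) d) by (unfold scal; simpl; unfold mult; simpl; ring).
  apply (is_derive_comp f Ropp); [exact H|].
  exact (is_derive_opp (fun t => t) s 1 (is_derive_id s)).
Qed.

Definition reverse_tangent (T : R -> R * R) (s : R) : R * R := (- fst (T (- s)), - snd (T (- s))).

Lemma sol_curve_reverse a b C al be X T k : sol_curve a b C al be X T k ->
  sol_curve a b C (Rbar_opp be) (Rbar_opp al) (fun s => X (- s)) (reverse_tangent T)
    (fun s => - k (- s)).
Proof.
  intros [Hab Hs]. split; [apply Rbar_opp_lt; exact Hab|].
  intros s Hi. apply in_ival_opp in Hi. destruct (Hs (- s) Hi) as [D1 [D2 [D3 [D4 [D5 D6]]]]].
  unfold reverse_tangent, lor, hmul in *; simpl in *.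
  split; [apply (is_derive_reverse (fun t => fst (X t))), D1|].
  split; [apply (is_derive_reverse (fun t => snd (X t))), D2|].
  split; [lra|].
  split; [replace (- k (- s) * - snd (T (- s))) with (- - (k (- s) * snd (T (- s)))) by ring|].
  { apply (is_derive_reverse (fun t => - fst (T t))), (is_derive_opp (fun t => fst (T t))), D4. }
  split; [replace (- k (- s) * - fst (T (- s))) with (- - (k (- s) * fst (T (- s)))) by ring|].
  { apply (is_derive_reverse (fun t => - snd (T t))), (is_derive_opp (fun t => snd (T t))), D5. }
  rewrite <- D6. ring.
Qed.

Lemma maximal_sol_reverse a b C al be X : maximal_sol a b C al be X ->
  maximal_sol a b C (Rbar_opp be) (Rbar_opp al) (fun s => X (- s)).
Proof.
  intros Hm [al' [be' [X' [T' [k' [Hs [Hl1 [Hl2 [Hne Hagr]]]]]]]]].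
  apply Hm. exists (Rbar_opp be'), (Rbar_opp al'), (fun s => X' (- s)), (reverse_tangent T'),
    (fun s => - k' (- s)).
  split; [apply sol_curve_reverse, Hs|].
  split; [rewrite <- (Rbar_opp_involutive al); apply Rbar_opp_le, Hl2|].
  split; [rewrite <- (Rbar_opp_involutive be); apply Rbar_opp_le, Hl1|].
  split.
  - destruct Hne as [Hne|Hne]; [right|left]; intros E; apply Hne, Rbar_opp_eq;
      rewrite Rbar_opp_involutive; exact E.
  - intros s Hi. rewrite Hagr, Ropp_involutive; [reflexivity|].
    apply in_ival_opp. rewrite Ropp_involutive. exact Hi.
Qed.

Lemma x_unbounded_below a b C al be X T k sg : sol_curve a b C al be X T k ->
  sg = 1 \/ sg = -1 -> (forall s, in_ival al be s -> 0 < sg * fst (T s)) ->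
  maximal_sol a b C al be X -> forall K, exists s, in_ival al be s /\ sg * fst (X s) <= K.
Proof.
  intros Hsol Hsg Hpos Hmax K.
  destruct (x_unbounded_above _ _ _ _ _ _ _ _ (sol_curve_reverse _ _ _ _ _ _ _ _ Hsol) (- sg))
    with (K := - K) as [s [Hs HK]].
  - destruct Hsg; [right|left]; lra.
  - intros s Hs. apply in_ival_opp, Hpos in Hs. unfold reverse_tangent. simpl. lra.
  - apply maximal_sol_reverse, Hmax.
  - exists (- s). split; [apply in_ival_opp; exact Hs|lra].
Qed.

Lemma surjective_of_unbounded al be (x : R -> R) sg : sg = 1 \/ sg = -1 ->
  (forall s, in_ival al be s -> continuity_pt x s) ->
  (forall K, exists s, in_ival al be s /\ K <= sg * x s) ->
  (forall K, exists s, in_ival al be s /\ sg * x s <= K) ->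
  forall t, exists s, in_ival al be s /\ x s = t.
Proof.
  intros Hsg Hc Hup Hdown t.
  destruct (Hup (sg * t)) as [sh [Hsh Hh]]. destruct (Hdown (sg * t)) as [sl [Hsl Hl]].
  assert (Hcont : forall u v w, in_ival al be u -> in_ival al be v -> u <= w <= v ->
            continuity_pt (fun s => sg * x s - sg * t) w /\ in_ival al be w).
  { intros u v w Hu Hv Hw.
    assert (in_ival al be w) by (apply (in_ival_between _ _ u v); assumption).
    split; [|assumption]. apply continuity_pt_minus; [apply continuity_pt_scal, Hc; assumption|].
    apply continuity_pt_const. intros ? ?. reflexivity. }
  assert (Hroot : exists s, in_ival al be s /\ sg * x s - sg * t = 0).
  { destruct (Rle_or_lt sl sh) as [Hlh|Hlh].
    - destruct (IVT_le (fun s => sg * x s - sg * t) sl sh Hlh) as [z [Hz Hz0]];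
        [intros; apply (Hcont sl sh); assumption|lra|].
      exists z. split; [apply (Hcont sl sh z); assumption|exact Hz0].
    - destruct (IVT_le (fun s => - (sg * x s - sg * t)) sh sl ltac:(lra)) as [z [Hz Hz0]];
        [intros; apply continuity_pt_opp, (Hcont sh sl); assumption|lra|].
      exists z. split; [apply (Hcont sh sl z); assumption|lra]. }
  destruct Hroot as [s [Hs E]]. exists s. split; [exact Hs|].
  destruct Hsg as [-> | ->]; lra.
Qed.

Lemma entire_graph_of_expanding al be (x y p q : R -> R) :
  (forall s, in_ival al be s ->
     is_derive x s (p s) /\ is_derive y s (q s) /\ Rabs (q s) < Rabs (p s)) ->
  (forall s s', in_ival al be s -> in_ival al be s' -> Rabs (s - s') <= Rabs (x s - x s')) ->
  (forall t, exists s, in_ival al be s /\ x s = t) ->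
  exists f : R -> R, (forall t, ex_derive f t /\ Rabs (Derive f t) < 1) /\
    (forall s, in_ival al be s -> y s = f (x s)).
Proof.
  intros Hd Hexp Hsurj.
  destruct (functional_choice (fun t s => in_ival al be s /\ x s = t) Hsurj) as [g Hg].
  assert (Hgx : forall s, in_ival al be s -> g (x s) = s).
  { intros s Hs. destruct (Hg (x s)) as [Hgs E].
    pose proof (Hexp _ _ Hgs Hs) as H. rewrite E, Rminus_diag, Rabs_R0 in H.
    apply Rminus_diag_uniq, Rabs_eq_0. pose proof (Rabs_pos (g (x s) - s)). lra. }
  assert (Hglip : forall t t', Rabs (g t - g t') <= 1 * Rabs (t - t')).
  { intros t t'. rewrite Rmult_1_l. destruct (Hg t) as [H1 E1]. destruct (Hg t') as [H2 E2].
    rewrite <- E1, <- E2 at 2. apply Hexp; assumption. }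
  assert (Hfd : forall t, is_derive (fun u => y (g u)) t (/ p (g t) * q (g t))).
  { intros t. destruct (Hg t) as [Hgt _]. destruct (Hd _ Hgt) as [Dx [Dy Hqp]].
    apply (is_derive_comp y g); [exact Dy|].
    apply (is_derive_inverse x); [apply (lipschitz_continuous g 1 Hglip)| |exact Dx|].
    - apply filter_forall. intros u. apply Hg.
    - intros E. rewrite E, Rabs_R0 in Hqp. pose proof (Rabs_pos (q (g t))). lra. }
  exists (fun t => y (g t)). split.
  - intros t. split; [eexists; apply Hfd|].
    replace (Derive _ t) with (/ p (g t) * q (g t)) by (symmetry; apply is_derive_unique, Hfd).
    destruct (Hg t) as [Hgt _]. destruct (Hd _ Hgt) as [_ [_ Hqp]].
    pose proof (Rabs_pos (q (g t))).
    rewrite Rabs_mult, Rabs_inv. apply (Rmult_lt_reg_l (Rabs (p (g t)))); [lra|].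
    rewrite <- Rmult_assoc, Rinv_r, Rmult_1_l, Rmult_1_r by lra. exact Hqp.
  - intros s Hs. rewrite Hgx by exact Hs. reflexivity.
Qed.

Theorem lemma4p1 (a b : R) (C : R * R) (al be : Rbar)
  (X T : R -> R * R) (k : R -> R) :
  sol_curve a b C al be X T k ->
  maximal_sol a b C al be X ->
  exists f : R -> R,
    (forall t : R, ex_derive f t /\ Rabs (Derive f t) < 1) /\
    (forall s, in_ival al be s -> snd (X s) = f (fst (X s))) /\
    (forall t : R, exists s, in_ival al be s /\ fst (X s) = t).
Proof.
  intros Hsol Hmax.
  destruct (tangent_sign _ _ _ _ _ _ _ _ Hsol) as [sg [Hsg Hpos]].
  assert (Hsurj : forall t, exists s, in_ival al be s /\ fst (X s) = t).
  { apply (surjective_of_unbounded _ _ _ sg Hsg).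
    - intros s Hs. apply (curve_state_continuous _ _ _ _ _ _ _ _ Hsol s 0); [exact Hs|lia].
    - exact (x_unbounded_above _ _ _ _ _ _ _ _ Hsol sg Hsg Hpos Hmax).
    - exact (x_unbounded_below _ _ _ _ _ _ _ _ sg Hsol Hsg Hpos Hmax). }
  destruct (entire_graph_of_expanding al be (fun s => fst (X s)) (fun s => snd (X s))
    (fun s => fst (T s)) (fun s => snd (T s))) as [f [Hf Hgraph]].
  - intros s Hs. split; [apply (sol_derive_x _ _ _ _ _ _ _ _ Hsol s Hs)|].
    split; [apply (sol_derive_y _ _ _ _ _ _ _ _ Hsol s Hs)|].
    apply (tangent_abs_lt _ _ _ _ _ _ _ _ Hsol s Hs).
  - exact (x_expanding _ _ _ _ _ _ _ _ Hsol sg Hsg Hpos).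
  - exact Hsurj.
  - exists f. auto.
Qed.
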